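(* Consider the noiseless least squares deterministic dynamics with exact line search described in the context. Then \[ \frac{\lambda_{\min}(K)}{\frac1d\mathrm{Tr}(K^2)}\le\gamma_t^{\mathrm{line}}\quad\text{for all }t\ge0. \] Moreover, suppose $K$ has only two distinct eigenvalues $\lambda_1>\lambda_2>0$, with $d/2$ eigenvalues equal to $\lambda_1$ and $d/2$ equal to $\lambda_2$. Then $\lim_{t\to\infty}\gamma_t^{\mathrm{line}}$ exists and \[ \frac{\lambda_{\min}(K)}{\frac1d\mathrm{Tr}(K^2)}\le\lim_{t\to\infty}\gamma_t^{\mathrm{line}}\le\frac{2\lambda_{\min}(K)}{\frac1d\mathrm{Tr}(K^2)}. \]
   Context: Noiseless least squares: $\mathcal R(X)=\frac12(X-X^\star)^TK(X-X^\star)$ with $K\in\mathbb R^{d\times d}$ symmetric positive definite with eigenpairs $(\lambda_i,\omega_i)$. Its deterministic equivalent dynamics under a learning-rate curve $\gamma_t$: functions $D_i^2(t)\ge0$ with $D_i^2(0)=d\langle X_0-X^\star,\omega_i\rangle^2$ solving $\frac{d}{dt}D_i^2(t)=-2\gamma_t\lambda_iD_i^2(t)+2\gamma_t^2\lambda_iR(t)$, where $R(t)=\frac1{2d}\sum_{i=1}^d\lambda_iD_i^2(t)$. Exact line search chooses at each time $\gamma_t=\gamma_t^{\mathrm{line}}\in\arg\min_\gamma\frac{d}{dt}R(t)$, which is \[\gamma_t^{\mathrm{line}}=\frac{\sum_{i=1}^d\lambda_i^2D_i^2(t)}{2\,\mathrm{Tr}(K^2)\,R(t)}.\] *)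

From HB Require Import structures.
From mathcomp Require Import all_boot all_order all_algebra.
From mathcomp Require Import all_classical all_reals all_analysis.
Set Implicit Arguments. Unset Strict Implicit. Unset Printing Implicit Defensive.
Import Order.TTheory GRing.Theory Num.Theory.
Import numFieldNormedType.Exports.
Local Open Scope ring_scope.

(* D2 i t stands for D_i^2(t). *)

Definition risk (R : realType) (d : nat) (lam : 'I_d -> R) (D2 : 'I_d -> R -> R)
  (t : R) : R :=
  (2 * d%:R)^-1 * \sum_(i < d) lam i * D2 i t.

Definition gamma_line (R : realType) (d : nat) (K : 'M[R]_d) (lam : 'I_d -> R)
  (D2 : 'I_d -> R -> R) (t : R) : R :=
  (\sum_(i < d) lam i ^+ 2 * D2 i t) / (2 * \tr (K *m K) * risk lam D2 t).

(* Minimum of the (complete list of) eigenvalues lam_0, ..., lam_{d-1}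
   (the default value is irrelevant when d > 0: it is one of the lam i). *)
Definition lambda_min (R : realType) (d : nat) (lam : 'I_d -> R) : R :=
  \big[Num.min/(if [pick i : 'I_d] is Some i0 then lam i0 else 0)]_(i < d) lam i.

Definition inner (R : realType) (d : nat) (u v : 'cV[R]_d) : R :=
  \sum_(j < d) u j 0 * v j 0.

From Pilot Require Import Defs.
From HB Require Import structures.
From mathcomp Require Import all_boot all_order all_algebra.
From mathcomp Require Import all_classical all_reals all_analysis.
From mathcomp Require Import ring lra.
Import Order.TTheory GRing.Theory Num.Theory.
Import numFieldNormedType.Exports.
Set Implicit Arguments.
Unset Strict Implicit.
Unset Printing Implicit Defensive.
Local Open Scope classical_set_scope.
Local Open Scope ring_scope.

(** Write [S = sum_i lam_i D_i^2 = 2 d R] and [N = sum_i lam_i^2 D_i^2], so that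
   exact line search is [gamma = d N / (Tr(K^2) S)].  Since [lam_min S <= N], the
   lower bound holds as long as [R > 0]; and along the flow
   [R' = - (Tr(K^2) / d) gamma^2 R] with [gamma] bounded, so [R] stays positive
   by Gronwall's inequality.

   With two eigenvalues [l1 > l2] of multiplicity [d/2] and [c = l1^2 + l2^2],
   the step is [gamma = 2 (l2 + (l1 - l2) p) / c], where [p] is the share of the
   risk carried by the [l1]-eigenspace, and [p' = gamma / c * Q(p)] for a
   quadratic [Q] with [Q(0) > 0 > Q(1)].  Its root [r] in [(0, 1)] attracts all
   of [[0, 1]] exponentially fast, so [gamma] tends to
   [2 (l2 + (l1 - l2) r) / c]; the two bounds come from [r > 0] and from
   [Q(l2 / (l1 - l2)) < 0], i.e. [(l1 - l2) r < l2]. *)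

Section Gronwall.
Context {R : realType}.

Lemma is_derive_expRM (k x : R) :
  is_derive x 1 (fun s => expR (k * s)) (expR (k * x) * k).
Proof.
have dk : is_derive x 1 ( *%R k) k.
  by rewrite -[X in is_derive _ _ _ X]mulr1; exact: is_deriveZ.
exact: (is_derive1_comp (f := expR) (g := *%R k)).
Qed.

Lemma gronwall_expR (f df : R -> R) (c : R) :
  (forall t : R, 0 < t -> is_derive t 1 f (df t)) ->
  (forall t : R, 0 < t -> c * f t <= df t) ->
  forall s t : R, 0 < s -> s <= t -> f s * expR (- c * s) <= f t * expR (- c * t).
Proof.
move=> f_derive df_ge s t s_gt0 st.
pose g := f * (fun u : R => expR (- c * u)).
have g_derive (u : R) : 0 < u ->
    is_derive u 1 g (f u *: (expR (- c * u) * - c) + expR (- c * u) *: df u).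
  by move=> u0; apply: is_deriveM; [exact: f_derive | exact: is_derive_expRM].
have : {in `]0, t + 1[ &, {homo g : x y / x <= y}}.
  apply: ger0_derive1_le_oo => u.
  - by rewrite in_itv /= => /andP[u0 _]; case: (g_derive u u0).
  - rewrite in_itv /= => /andP[u0 _].
    have gu := g_derive u u0; rewrite derive1E derive_val /GRing.scale /=.
    have := df_ge u u0; have := expR_gt0 (- c * u); nra.
  - rewrite inE /= in_itv /= => /andP[u0 _].
    apply: differentiable_continuous; apply/derivable1_diffP.
    by case: (g_derive u u0).
move=> /(_ s t); rewrite !in_itv /= s_gt0 (lt_le_trans s_gt0 st) ltrDl ltr01.
by rewrite (le_lt_trans st) ?ltrDl //; apply.
Qed.

Lemma gt0_of_derive_ge (f df : R -> R) (c : R) :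
  0 < f 0 -> f x @[x --> 0^'+] --> f 0 ->
  (forall t : R, 0 < t -> is_derive t 1 f (df t)) ->
  (forall t : R, 0 < t -> c * f t <= df t) ->
  forall t : R, 0 <= t -> 0 < f t.
Proof.
move=> f0_gt0 f_cont f_derive df_ge t; rewrite le_eqVlt => /predU1P[<-//|t_gt0].
near (0 : R)^'+ => s.
have fs_gt0 : 0 < f s by near: s; exact: cvgr_gt f_cont 0 f0_gt0.
have s_gt0 : 0 < s by near: s; exact: nbhs_right_gt.
have st : s <= t by near: s; apply: nbhs_right_le.
have := gronwall_expR f_derive df_ge s_gt0 st.
have := expR_gt0 (- c * s); have := expR_gt0 (- c * t); nra.
Unshelve. all: end_near.
Qed.

Lemma cvg_of_contracting (p dp : R -> R) (r m : R) : 0 < m ->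
  (forall t : R, 0 < t -> is_derive t 1 p (dp t)) ->
  (forall t : R, 0 < t -> (p t - r) * dp t <= - m * (p t - r) ^+ 2) ->
  p t @[t --> +oo] --> r.
Proof.
move=> m_gt0 p_derive contract.
pose V := - (p - cst r) ^+ 2.
have V_derive (t : R) : 0 < t -> is_derive t 1 V (- (2 * (p t - r) * dp t)).
  move=> t0; have dp_t := p_derive t t0.
  have dq := is_deriveB dp_t (is_derive_cst r t 1).
  have dV := is_deriveN (is_deriveX 2 dq).
  apply: is_derive_eq dV _.
  by rewrite subr0 expr1.
have VE t : V t = - (p t - r) ^+ 2 by [].
have dV_ge (t : R) : 0 < t -> - (2 * m) * V t <= - (2 * (p t - r) * dp t).
  by move=> t0; have := contract t t0; rewrite VE; nra.
pose C := (p 1 - r) ^+ 2 * expR (2 * m).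
have V_le (t : R) : 1 <= t -> (p t - r) ^+ 2 <= C * expR (- (2 * m * t)).
  move=> t1; have := gronwall_expR V_derive dV_ge ltr01 t1.
  rewrite !VE opprK mulr1 !mulNr lerN2 => le_t.
  by rewrite -(ler_pM2r (expR_gt0 (2 * m * t))) expRN divfK // gt_eqF ?expR_gt0.
have C_cvg : C * expR (- (2 * m * t)) @[t --> +oo] --> 0.
  rewrite -(mulr0 C); apply: cvgM; first exact: cvg_cst.
  have -> : (fun t => expR (- (2 * m * t))) = (fun x => expR (- x)) \o *%R (2 * m).
    by [].
  apply: cvg_comp; last exact: cvgr_expR.
  apply/cvgryPge => A; near=> t.
  rewrite -ler_pdivrMl; last by rewrite mulr_gt0.
  by near: t; apply: nbhs_pinfty_ge; exact: num_real.
apply/cvgrPdist_lt => e e0; near=> t.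
have t1 : 1 <= t by near: t; apply: nbhs_pinfty_ge; exact: num_real.
have := V_le t t1.
have : C * expR (- (2 * m * t)) < e ^+ 2.
  by near: t; apply: cvgr_lt C_cvg _ _; rewrite exprn_gt0.
move=> bound_lt_e2 Vt_le; rewrite ltr_norml; apply/andP; split; nra.
Unshelve. all: end_near.
Qed.

End Gronwall.

Lemma quadratic_factor {R : realType} (a b e z : R) :
  0 < a -> a * z ^+ 2 + b * z + e < 0 ->
  exists r1 r2, [/\ r1 < z, z < r2 &
    forall x, a * x ^+ 2 + b * x + e = a * ((x - r1) * (x - r2))].
Proof.
move=> a_gt0 neg_z; set D := b ^+ 2 - 4 * a * e.
have lt_D : (2 * a * z + b) ^+ 2 < D by rewrite /D; nra.
have D_ge0 : 0 <= D := le_trans (sqr_ge0 _) (ltW lt_D).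
have s_ge0 := sqrtr_ge0 D; have s2 := sqr_sqrtr D_ge0.
set s := Num.sqrt D in s_ge0 s2.
have [lt_z gt_z] : - s < 2 * a * z + b /\ 2 * a * z + b < s.
  by split; nra.
exists ((- b - s) / (2 * a)), ((- b + s) / (2 * a)); split.
- by rewrite ltr_pdivrMr ?mulr_gt0 //; lra.
- by rewrite ltr_pdivlMr ?mulr_gt0 //; lra.
- move=> x; have a_neq0 : a != 0 by rewrite gt_eqF.
  rewrite [RHS](_ : _ = a * x ^+ 2 + b * x + (b ^+ 2 - s ^+ 2) / (4 * a)).
    by rewrite s2 /D; congr (_ + _); field.
  by field.
Qed.

(* With [c = l1^2 + l2^2], [gamma / c * share_drift l1 l2 p] is the time
   derivative of the share [p] of the risk carried by the [l1]-eigenspace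
   (lemma [share_hi_derive]). *)
Definition share_drift {R : ringType} (l1 l2 x : R) : R :=
  (l2 + (l1 - l2) * x) * (l1 ^+ 2 + (l1 ^+ 2 + l2 ^+ 2) * x)
  - 2 * l1 * (l1 ^+ 2 + l2 ^+ 2) * x.

Lemma share_drift_factor {R : realType} (l1 l2 : R) : 0 < l2 -> l2 < l1 ->
  exists r1 r2, [/\ 0 < r1, (l1 - l2) * r1 < l2, 1 < r2 &
    forall x, share_drift l1 l2 x =
              (l1 - l2) * (l1 ^+ 2 + l2 ^+ 2) * ((x - r1) * (x - r2))].
Proof.
move=> l2_gt0 l21; set c := l1 ^+ 2 + l2 ^+ 2.
have l1_gt0 : 0 < l1 := lt_trans l2_gt0 l21.
have dl_gt0 : 0 < l1 - l2 by rewrite subr_gt0.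
have a_gt0 : 0 < (l1 - l2) * c by rewrite mulr_gt0 // addr_gt0 ?exprn_gt0.
have driftE x : share_drift l1 l2 x = (l1 - l2) * c * x ^+ 2
    + (l2 * c + (l1 - l2) * l1 ^+ 2 - 2 * l1 * c) * x + l2 * l1 ^+ 2.
  by rewrite /share_drift -/c; ring.
have [|r1 [r2 [r1_lt1 r2_gt1 factor]]] := quadratic_factor (z := 1)
    (b := l2 * c + (l1 - l2) * l1 ^+ 2 - 2 * l1 * c) (e := l2 * l1 ^+ 2) a_gt0.
  rewrite -driftE (_ : share_drift l1 l2 1 = - (l1 * l2 ^+ 2)).
    by rewrite oppr_lt0 mulr_gt0 ?exprn_gt0.
  by rewrite /share_drift; ring.
have {}factor x : share_drift l1 l2 x = (l1 - l2) * c * ((x - r1) * (x - r2)).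
  by rewrite driftE factor.
exists r1, r2; split => //.
- have : 0 < (l1 - l2) * c * ((0 - r1) * (0 - r2)).
    by rewrite -factor /share_drift !(mulr0, addr0, subr0) mulr_gt0 ?exprn_gt0.
  by rewrite !sub0r mulrNN pmulr_rgt0 // pmulr_lgt0 // (lt_trans ltr01).
- (* At [x0] the step [l2 + (l1 - l2) x0] is twice its minimum [l2]. *)
  pose x0 := l2 / (l1 - l2).
  have x0E : (l1 - l2) * x0 = l2 by rewrite /x0 mulrC divfK ?gt_eqF.
  have drift_x0 : share_drift l1 l2 x0 = - (2 * l2 ^+ 3).
    transitivity (2 * l2 * l1 ^+ 2 - 2 * c * ((l1 - l2) * x0)).
      by rewrite /share_drift [in LHS]x0E -/c; ring.
    by rewrite x0E /c; ring.
  have : (x0 - r1) * (x0 - r2) < 0.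
    by rewrite -(pmulr_rlt0 _ a_gt0) -factor drift_x0 oppr_lt0 mulr_gt0 ?exprn_gt0.
  by move=> neg; rewrite -[ltRHS]x0E ltr_pM2l //; nra.
Qed.

Lemma two_fibers_cover (T : finType) (U : eqType) (f : T -> U) (x y : U) :
  x != y -> (#|[pred i | f i == x]| + #|[pred i | f i == y]|)%N = #|T| ->
  forall i, f i = x \/ f i = y.
Proof.
move=> xy card_xy i.
have [->|fi_neq_x] := eqVneq (f i) x; [by left | right].
have sub : [pred j | f j == y] \subset [predC [pred j | f j == x]].
  by apply/fintype.subsetP => j; rewrite !inE => /eqP ->; rewrite eq_sym.
have card_eq : #|[pred j | f j == y]| = #|[predC [pred j | f j == x]]|.
  by apply/eqP; rewrite -(eqn_add2l #|[pred j | f j == x]|) cardC card_xy.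
have /subset_cardP/(_ sub) eq_fiber := card_eq.
by have := eq_fiber i; rewrite !inE fi_neq_x => /eqP.
Qed.

Section Spectrum.
Context {R : realType} {d : nat}.

Lemma inner_col (W : 'M[R]_d) (v : 'cV[R]_d) i : inner v (col i W) = (W^T *m v) i 0.
Proof. by rewrite /inner mxE; apply: eq_bigr => j _; rewrite !mxE mulrC. Qed.

Variables (K W : 'M[R]_d) (lam : 'I_d -> R).
Hypothesis W_orthonormal : W^T *m W = 1%:M.
Hypothesis K_eigen : forall i, K *m col i W = lam i *: col i W.

Lemma mulmx_eigenbasis : K *m W = W *m diag_mx (\row_i lam i).
Proof.
apply/matrixP => j i; rewrite mul_mx_diag !mxE mulrC.
have := congr1 (fun v : 'cV_d => v j 0) (K_eigen i); rewrite !mxE => <-.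
by apply: eq_bigr => k _; rewrite !mxE.
Qed.

Lemma mxtrace_sqr_eigen : \tr (K *m K) = \sum_i lam i ^+ 2.
Proof.
set D := diag_mx (\row_i lam i).
have KE : K = W *m D *m W^T.
  by rewrite -mulmx_eigenbasis -mulmxA (mulmx1C W_orthonormal) mulmx1.
have -> : K *m K = W *m (D *m D *m W^T).
  rewrite {1}KE -!mulmxA; congr (W *m (D *m _)).
  by rewrite KE !mulmxA W_orthonormal mul1mx.
rewrite mxtrace_mulC -[_ *m W]mulmxA W_orthonormal mulmx1 mulmx_diag mxtrace_diag.
by apply: eq_bigr => i _; rewrite !mxE expr2.
Qed.

Lemma eigenvalue_gt0 :
  (forall v : 'cV[R]_d, v != 0 -> 0 < (v^T *m K *m v) 0 0) -> forall i, 0 < lam i.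
Proof.
move=> K_posdef i.
have colW_norm : ((col i W)^T *m col i W) 0 0 = 1.
  transitivity ((W^T *m W) i i); last by rewrite W_orthonormal mxE eqxx.
  by rewrite !mxE; apply: eq_bigr => k _; rewrite !mxE.
have colW_neq0 : col i W != 0.
  by apply: contra_eq_neq colW_norm => ->; rewrite mulmx0 mxE eq_sym oner_neq0.
have := K_posdef _ colW_neq0.
by rewrite -mulmxA K_eigen -scalemxAr mxE colW_norm mulr1.
Qed.

Lemma exists_inner_col_neq0 (v : 'cV[R]_d) :
  v != 0 -> exists i, inner v (col i W) != 0.
Proof.
move=> v_neq0; have /matrix0Pn[i [j]] : W^T *m v != 0.
  apply: contra_neq v_neq0 => Wv0.
  by rewrite -[v]mul1mx -(mulmx1C W_orthonormal) -mulmxA Wv0 mulmx0.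
by rewrite (ord1 j) -inner_col; exists i.
Qed.
End Spectrum.

Lemma lambda_min_le {R : realType} {d : nat} (lam : 'I_d -> R) i :
  lambda_min lam <= lam i.
Proof. exact: bigmin_le. Qed.

Lemma lambda_min_ge {R : realType} {d : nat} (lam : 'I_d -> R) (m : R) :
  (0 < d)%N -> (forall i, m <= lam i) -> m <= lambda_min lam.
Proof.
move=> d_gt0 m_le; apply: le_bigmin => [|i _]; last exact: m_le.
by case: pickP => [i _ | /(_ (Ordinal d_gt0))].
Qed.

Section LineSearch.
Context {R : realType} {d : nat}.
Variables (K : 'M[R]_d) (lam : 'I_d -> R) (D2 : 'I_d -> R -> R).
Hypothesis d_gt0 : (0 < d)%N.
Hypothesis lam_gt0 : forall i, 0 < lam i.
Hypothesis trK : \tr (K *m K) = \sum_i lam i ^+ 2.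
Hypothesis D2_ge0 : forall i (t : R), 0 <= t -> 0 <= D2 i t.

Local Notation T := (\tr (K *m K)).
Local Notation risk := (risk lam D2).
Local Notation gamma := (gamma_line K lam D2).
Local Notation N t := (\sum_(i < d) lam i ^+ 2 * D2 i t).

Let d_neq0 : d%:R != 0 :> R. Proof. by rewrite pnatr_eq0 -lt0n. Qed.

Let T_gt0 : 0 < T.
Proof.
rewrite trK (bigD1 (Ordinal d_gt0)) //= ltr_pwDl ?exprn_gt0 //.
by apply: sumr_ge0 => i _; rewrite sqr_ge0.
Qed.

Lemma mass_risk (t : R) : \sum_(i < d) lam i * D2 i t = 2 * d%:R * risk t.
Proof. by rewrite /Defs.risk mulrA mulfV ?mul1r // mulf_neq0. Qed.

Lemma risk_ge0 (t : R) : 0 <= t -> 0 <= risk t.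
Proof.
move=> t_ge0; rewrite /Defs.risk mulr_ge0 ?invr_ge0 ?mulr_ge0 ?ler0n //.
by apply: sumr_ge0 => i _; exact: mulr_ge0 (ltW (lam_gt0 _)) (D2_ge0 _ t_ge0).
Qed.

Lemma risk_gt0_of i (t : R) : 0 <= t -> 0 < D2 i t -> 0 < risk t.
Proof.
move=> t_ge0 D2_gt0; rewrite /Defs.risk mulr_gt0 ?invr_gt0 ?mulr_gt0 ?ltr0n //.
rewrite (bigD1 i) //= ltr_pwDl ?mulr_gt0 //.
by apply: sumr_ge0 => j _; exact: mulr_ge0 (ltW (lam_gt0 _)) (D2_ge0 _ t_ge0).
Qed.

(* When [risk t = 0], [gamma t = N t / 0 = 0]: the identity still holds. *)
Lemma gamma_line_sqr (t : R) : gamma t ^+ 2 * (2 * T * risk t) = gamma t * N t.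
Proof.
have [r0|r_neq0] := eqVneq (risk t) 0.
  by rewrite /gamma_line r0 !mulr0 invr0 !mulr0 mul0r.
have den_neq0 : 2 * T * risk t != 0.
  by rewrite mulf_neq0 // mulf_neq0 // gt_eqF.
by rewrite expr2 -mulrA [X in _ * (X * _)]/gamma_line mulfVK.
Qed.

Hypothesis D2_derive : forall i (t : R), 0 < t ->
  is_derive t 1 (D2 i) (- 2 * gamma t * lam i * D2 i t + 2 * gamma t ^+ 2 * lam i * risk t).

Lemma risk_derive (t : R) : 0 < t ->
  is_derive t 1 risk (- (T / d%:R) * gamma t ^+ 2 * risk t).
Proof.
move=> t_gt0.
have := is_deriveZ (2 * d%:R)^-1
  (is_derive_sum (fun i => is_deriveZ (lam i) (D2_derive i t_gt0))).
have -> : (2 * d%:R)^-1 \*: \sum_(i < d) lam i \*: D2 i = risk.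
  by apply/funext => s; rewrite /= fct_sumE.
move/is_derive_eq; apply; rewrite /GRing.scale /=.
transitivity ((2 * d%:R)^-1 * (- 2 * (gamma t * N t) + 2 * gamma t ^+ 2 * risk t * T)).
  congr (_ * _); rewrite trK !mulr_sumr -big_split /=.
  by apply: eq_bigr => i _; ring.
by rewrite -gamma_line_sqr; field.
Qed.

Lemma gamma_line_ge0 (t : R) : 0 <= t -> 0 <= gamma t.
Proof.
move=> t_ge0; apply: divr_ge0.
  by apply: sumr_ge0 => i _; exact: mulr_ge0 (sqr_ge0 _) (D2_ge0 _ t_ge0).
exact: mulr_ge0 (mulr_ge0 (ler0n _ 2) (ltW T_gt0)) (risk_ge0 t_ge0).
Qed.

Let div_trace_risk (a : R) (t : R) : 0 < risk t ->
  a / (d%:R^-1 * T) = (a * \sum_(i < d) lam i * D2 i t) / (2 * T * risk t).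
Proof. by move=> r_gt0; rewrite mass_risk; field; rewrite d_neq0 !gt_eqF. Qed.

Lemma gamma_line_ge (m : R) (t : R) : 0 <= t -> 0 < risk t ->
  (forall i, m <= lam i) -> m / (d%:R^-1 * T) <= gamma t.
Proof.
move=> t_ge0 r_gt0 m_le.
have den_gt0 : 0 < 2 * T * risk t by rewrite mulr_gt0 // mulr_gt0.
rewrite (div_trace_risk m r_gt0) mulr_sumr /gamma_line ler_pM2r ?invr_gt0 //.
apply: ler_sum => i _; rewrite mulrA expr2.
by rewrite ler_wpM2r ?D2_ge0 // ler_wpM2r ?m_le // ltW.
Qed.

Lemma gamma_line_le (M : R) (t : R) : 0 <= t ->
  (forall i, lam i <= M) -> gamma t <= M / (d%:R^-1 * T).
Proof.
move=> t_ge0 le_M.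
have M_gt0 : 0 < M := lt_le_trans (lam_gt0 (Ordinal d_gt0)) (le_M _).
have [r0|r_neq0] := eqVneq (risk t) 0.
  rewrite /gamma_line r0 mulr0 invr0 mulr0 divr_ge0 ?(ltW M_gt0) //.
  by rewrite mulr_ge0 ?invr_ge0 ?ler0n // ltW.
have r_gt0 : 0 < risk t by rewrite lt_def r_neq0 risk_ge0.
have den_gt0 : 0 < 2 * T * risk t by rewrite mulr_gt0 // mulr_gt0.
rewrite (div_trace_risk M r_gt0) mulr_sumr /gamma_line ler_pM2r ?invr_gt0 //.
apply: ler_sum => i _; rewrite mulrA expr2.
by rewrite ler_wpM2r ?D2_ge0 // ler_wpM2r ?le_M // ltW.
Qed.

Lemma risk_gt0 : 0 < risk 0 -> (forall i, D2 i x @[x --> 0^'+] --> D2 i 0) ->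
  forall t : R, 0 <= t -> 0 < risk t.
Proof.
move=> r0_gt0 D2_cont.
pose M := \sum_(i < d) lam i.
have le_M i : lam i <= M.
  by rewrite /M (bigD1 i) //= lerDl; apply: sumr_ge0 => j _; exact: ltW.
pose c := - (T / d%:R) * (M / (d%:R^-1 * T)) ^+ 2.
have risk_cont : risk x @[x --> 0^'+] --> risk 0.
  apply: cvgM; first exact: cvg_cst.
  apply: (@cvg_big _ _ +%R 0 _ add_continuous) => i _.
  by apply: cvgM; [exact: cvg_cst | exact: D2_cont].
have drisk_ge (t : R) : 0 < t -> c * risk t <= - (T / d%:R) * gamma t ^+ 2 * risk t.
  move=> t_gt0; have t_ge0 := ltW t_gt0.
  have g_ge0 := gamma_line_ge0 t_ge0; have g_le := gamma_line_le t_ge0 le_M.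
  have gamma_le : gamma t ^+ 2 <= (M / (d%:R^-1 * T)) ^+ 2.
    by rewrite ler_sqr ?nnegrE // (le_trans g_ge0).
  rewrite /c -mulrA -[leRHS]mulrA ler_wnM2l ?ler_wpM2r ?risk_ge0 //.
  by rewrite oppr_le0 divr_ge0 ?ler0n // ltW.
exact: gt0_of_derive_ge r0_gt0 risk_cont risk_derive drisk_ge.
Qed.

Section TwoLevels.
Variables (l1 l2 : R) (h : nat).
Hypothesis l2_gt0 : 0 < l2.
Hypothesis l2_lt_l1 : l2 < l1.
Hypothesis lam_two : forall i, lam i = l1 \/ lam i = l2.
Hypothesis card_l1 : #|[pred i | lam i == l1]| = h.
Hypothesis card_l2 : #|[pred i | lam i == l2]| = h.
Hypothesis risk_pos : forall t : R, 0 <= t -> 0 < risk t.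

Local Notation c := (l1 ^+ 2 + l2 ^+ 2).

Let c_gt0 : 0 < c. Proof. by rewrite addr_gt0 ?exprn_gt0 // (lt_trans l2_gt0). Qed.

Lemma sum_two_levels (F : 'I_d -> R) :
  \sum_i F i = \sum_(i | lam i == l1) F i + \sum_(i | lam i == l2) F i.
Proof.
rewrite (bigID (fun i => lam i == l1)) /=; congr (_ + _); apply: eq_bigl => i.
by case: (lam_two i) => ->; rewrite eqxx ?(gt_eqF l2_lt_l1) ?(lt_eqF l2_lt_l1).
Qed.

Lemma sum_const_two_levels (F : R -> R) :
  \sum_i F (lam i) = h%:R * (F l1 + F l2).
Proof.
rewrite sum_two_levels.
rewrite (eq_bigr (fun=> F l1)) => [|i /eqP -> //].
rewrite [X in _ + X](eq_bigr (fun=> F l2)) => [|i /eqP -> //].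
by rewrite !sumr_const card_l1 card_l2 mulr_natl mulrnDl.
Qed.

Let natr_d : d%:R = 2 * h%:R :> R.
Proof.
have := sum_const_two_levels (fun=> 1); rewrite sumr_const card_ord => ->.
by rewrite mulrC.
Qed.

Let h_gt0 : 0 < h%:R :> R.
Proof. by rewrite -(@ltr_pM2l _ 2) // mulr0 -natr_d ltr0n. Qed.

Let trace_two : T = h%:R * c.
Proof. by rewrite trK (sum_const_two_levels (fun x => x ^+ 2)). Qed.

Let dtrace_two : d%:R^-1 * T = c / 2.
Proof. by rewrite trace_two natr_d; field; rewrite gt_eqF. Qed.

Let mass_hi t := \sum_(i < d | lam i == l1) D2 i t.
Let mass_lo t := \sum_(i < d | lam i == l2) D2 i t.
Let share_hi t := l1 * mass_hi t / (4 * h%:R * risk t).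

Lemma sum_mass_two_levels (F : R -> R) (t : R) :
  \sum_i F (lam i) * D2 i t = F l1 * mass_hi t + F l2 * mass_lo t.
Proof.
rewrite sum_two_levels /mass_hi /mass_lo !mulr_sumr.
by congr (_ + _); apply: eq_bigr => i /eqP ->.
Qed.

Let mass_two (t : R) : l1 * mass_hi t + l2 * mass_lo t = 4 * h%:R * risk t.
Proof. by rewrite -(sum_mass_two_levels id) mass_risk natr_d mulrA -natrM. Qed.

Lemma gamma_line_two_levels (t : R) : 0 <= t ->
  gamma t = 2 * (l2 + (l1 - l2) * share_hi t) / c.
Proof.
move=> t_ge0; have r_neq0 := gt_eqF (risk_pos t_ge0).
rewrite /gamma_line (sum_mass_two_levels (fun x => x ^+ 2)) trace_two /share_hi.
have -> : l1 ^+ 2 * mass_hi t + l2 ^+ 2 * mass_lo t =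
    l2 * (l1 * mass_hi t + l2 * mass_lo t) + (l1 - l2) * (l1 * mass_hi t) by ring.
rewrite mass_two; field.
by rewrite r_neq0 (gt_eqF h_gt0) (gt_eqF c_gt0).
Qed.

Lemma share_hi_ge0_le1 (t : R) : 0 <= t -> 0 <= share_hi t <= 1.
Proof.
move=> t_ge0; have r_gt0 := risk_pos t_ge0.
have mass_ge0 l m : 0 <= l -> 0 <= \sum_(i < d | lam i == m) l * D2 i t.
  by move=> l_ge0; apply: sumr_ge0 => i _; rewrite mulr_ge0 ?D2_ge0.
have hi_ge0 : 0 <= l1 * mass_hi t.
  by rewrite /mass_hi mulr_sumr mass_ge0 // ltW // (lt_trans l2_gt0).
have lo_ge0 : 0 <= l2 * mass_lo t by rewrite /mass_lo mulr_sumr mass_ge0 // ltW.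
have S_gt0 : 0 < l1 * mass_hi t + l2 * mass_lo t.
  by rewrite mass_two mulr_gt0 // mulr_gt0.
by rewrite /share_hi -mass_two divr_ge0 ?addr_ge0 //= ler_pdivrMr // mul1r lerDl.
Qed.

Lemma gamma_line_two_levels_ge (t : R) : 0 <= t -> 2 * l2 / c <= gamma t.
Proof.
move=> t_ge0; have /andP[p_ge0 _] := share_hi_ge0_le1 t_ge0.
rewrite gamma_line_two_levels // ler_pM2r ?invr_gt0 // ler_pM2l // lerDl.
by rewrite mulr_ge0 // subr_ge0 ltW.
Qed.

Lemma mass_hi_derive (t : R) : 0 < t -> is_derive t 1 mass_hi
  (- 2 * gamma t * l1 * mass_hi t + 2 * gamma t ^+ 2 * l1 * h%:R * risk t).
Proof.
move=> t_gt0.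
have mass_hiE : mass_hi = \sum_(i < d) (fun s => if lam i == l1 then D2 i s else 0).
  by apply/funext => s; rewrite fct_sumE /mass_hi big_mkcond.
apply: is_derive_eq.
  rewrite mass_hiE; apply: (is_derive_sum (dh := fun i => if lam i == l1 then
    - 2 * gamma t * lam i * D2 i t + 2 * gamma t ^+ 2 * lam i * risk t else 0)) => i.
  by case: eqP => _; [exact: D2_derive | exact: is_derive_cst].
rewrite -big_mkcond /=.
rewrite (eq_bigr (fun i => - 2 * gamma t * l1 * D2 i t + 2 * gamma t ^+ 2 * l1 * risk t)).
  by rewrite big_split /= -mulr_sumr sumr_const card_l1 -mulr_natr /mass_hi; ring.
by move=> i /eqP ->.
Qed.

Lemma share_hi_derive (t : R) : 0 < t ->
  is_derive t 1 share_hi (gamma t / c * share_drift l1 l2 (share_hi t)).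
Proof.
move=> t_gt0; have t_ge0 := ltW t_gt0; have r_neq0 := gt_eqF (risk_pos t_ge0).
have share_hiE : share_hi = (cst l1 * mass_hi) * (fun s => (4 * h%:R * risk s)^-1).
  by [].
have den_derive : is_derive t 1 (fun s : R => 4 * h%:R * risk s)
    (4 * h%:R * (- (T / d%:R) * gamma t ^+ 2 * risk t)).
  exact: is_deriveZ (risk_derive t_gt0).
have den_gt0 : 0 < 4 * h%:R * risk t by rewrite mulr_gt0 ?risk_pos // mulr_gt0.
apply: is_derive_eq.
  rewrite share_hiE; apply: is_deriveM.
    exact: is_deriveM (is_derive_cst _ _ _) (mass_hi_derive t_gt0).
  by apply: (is_deriveV _ den_derive); exact: lt0r_neq0.
rewrite /GRing.scale /=.
transitivity (gamma t / 2 * (gamma t * (l1 ^+ 2 + c * share_hi t) - 4 * l1 * share_hi t)).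
  rewrite (_ : (cst l1 * mass_hi) t = l1 * mass_hi t) // trace_two natr_d /share_hi.
  by field; rewrite r_neq0 (gt_eqF h_gt0).
rewrite [in X in _ * X](gamma_line_two_levels t_ge0) /share_drift.
by field; rewrite gt_eqF.
Qed.

Lemma share_hi_cvg : exists r : R,
  [/\ 0 < r, (l1 - l2) * r < l2 & share_hi t @[t --> +oo] --> r].
Proof.
have [r1 [r2 [r1_gt0 r1_lt r2_gt1 factor]]] := share_drift_factor l2_gt0 l2_lt_l1.
exists r1; split => //.
have dl_gt0 : 0 < l1 - l2 by rewrite subr_gt0.
set k := 2 * l2 / c.
have k_ge0 : 0 <= k by rewrite divr_ge0 ?mulr_ge0 // ltW.
pose m := k * ((l1 - l2) * (r2 - 1)).
have m_gt0 : 0 < m by rewrite !mulr_gt0 ?invr_gt0 // subr_gt0.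
apply: (cvg_of_contracting m_gt0 share_hi_derive) => t t_gt0.
have t_ge0 := ltW t_gt0; have /andP[_ p_le1] := share_hi_ge0_le1 t_ge0.
have := gamma_line_two_levels_ge t_ge0; rewrite factor.
set p := share_hi t; set g := gamma t => g_ge.
have -> : (p - r1) * (g / c * ((l1 - l2) * c * ((p - r1) * (p - r2)))) =
    (l1 - l2) * (p - r1) ^+ 2 * (g * (p - r2)) by field; rewrite gt_eqF.
have -> : - m * (p - r1) ^+ 2 = (l1 - l2) * (p - r1) ^+ 2 * (k * (1 - r2)).
  by rewrite /m; ring.
apply: ler_wpM2l; first by rewrite mulr_ge0 ?sqr_ge0 // ltW.
have : 0 <= (g - k) * (r2 - p) by rewrite mulr_ge0 // subr_ge0 ?(le_trans p_le1) // ltW.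
have : 0 <= k * (1 - p) by rewrite mulr_ge0 // subr_ge0.
nra.
Qed.

Lemma gamma_line_two_levels_cvg : exists l : R,
  gamma t @[t --> +oo] --> l /\
  l2 / (d%:R^-1 * T) <= l /\ l <= 2 * l2 / (d%:R^-1 * T).
Proof.
have [r [r_gt0 r_lt share_cvg]] := share_hi_cvg.
exists (2 * (l2 + (l1 - l2) * r) / c); split; last split.
- have affine_cvg : 2 * (l2 + (l1 - l2) * share_hi t) / c @[t --> +oo] -->
      2 * (l2 + (l1 - l2) * r) / c.
    apply: cvgM; last exact: cvg_cst.
    apply: cvgM; first exact: cvg_cst.
    by apply: cvgD; [exact: cvg_cst | apply: cvgM; [exact: cvg_cst | exact: share_cvg]].
  apply: cvg_trans affine_cvg; apply: near_eq_cvg; near=> t.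
  by rewrite gamma_line_two_levels.
- rewrite dtrace_two (_ : l2 / (c / 2) = 2 * l2 / c); last by field; rewrite gt_eqF.
  by rewrite ler_pM2r ?invr_gt0 // ler_pM2l // lerDl mulr_ge0 ?(ltW r_gt0) // subr_ge0 ltW.
- rewrite dtrace_two (_ : 2 * l2 / (c / 2) = 2 * (2 * l2) / c).
    by rewrite ler_pM2r ?invr_gt0 // ler_pM2l //; lra.
  by field; rewrite gt_eqF.
Unshelve. all: end_near.
Qed.

End TwoLevels.
End LineSearch.

Lemma lambda_min_two_valued {R : realType} {d : nat} (lam : 'I_d -> R) (l1 l2 : R) j :
  l2 <= l1 -> (forall i, lam i = l1 \/ lam i = l2) -> lam j = l2 ->
  lambda_min lam = l2.
Proof.
move=> l21 lam_two lam_j; apply/eqP; rewrite eq_le -{1}lam_j lambda_min_le /=.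
apply: lambda_min_ge => [|i]; first exact: (leq_ltn_trans (leq0n _) (ltn_ord j)).
by case: (lam_two i) => ->.
Qed.

Theorem proposition1 (R : realType) (d : nat) (K : 'M[R]_d)
  (lam : 'I_d -> R) (W : 'M[R]_d) (X0 Xstar : 'cV[R]_d)
  (D2 : 'I_d -> R -> R) :
  (0 < d)%N ->
  (* K symmetric positive definite *)
  K^T = K ->
  (forall v : 'cV[R]_d, v != 0 -> 0 < (v^T *m K *m v) 0 0) ->
  (* (lam i, omega_i := col i W) are the eigenpairs, omega orthonormal basis *)
  W^T *m W = 1%:M ->
  (forall i : 'I_d, K *m col i W = lam i *: col i W) ->
  (* nontrivial initialization *)
  X0 != Xstar ->
  (* deterministic-equivalent dynamics driven by exact line search *)
  (forall i : 'I_d, D2 i 0 = d%:R * (inner (X0 - Xstar) (col i W)) ^+ 2) ->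
  (forall i : 'I_d, forall t : R, 0 <= t -> 0 <= D2 i t) ->
  (forall i : 'I_d, D2 i x @[x --> 0^'+] --> D2 i 0) ->
  (forall i : 'I_d, forall t : R, 0 < t ->
     is_derive t 1 (D2 i)
       (- 2 * gamma_line K lam D2 t * lam i * D2 i t
        + 2 * gamma_line K lam D2 t ^+ 2 * lam i * risk lam D2 t)) ->
  (forall t : R, 0 <= t ->
     lambda_min lam / (d%:R^-1 * \tr (K *m K)) <= gamma_line K lam D2 t)
  /\
  ((exists l1 l2 : R, l1 > l2 /\ l2 > 0 /\ ~~ odd d /\
      #|[pred i : 'I_d | lam i == l1]| = d./2 /\
      #|[pred i : 'I_d | lam i == l2]| = d./2) ->
   exists l : R,
     gamma_line K lam D2 t @[t --> +oo] --> l /\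
     lambda_min lam / (d%:R^-1 * \tr (K *m K)) <= l /\
     l <= 2 * lambda_min lam / (d%:R^-1 * \tr (K *m K))).
Proof.
move=> d_gt0 _ K_posdef W_orth K_eigen X0_neq D2_init D2_ge0 D2_cont D2_derive.
have lam_gt0 := eigenvalue_gt0 W_orth K_eigen K_posdef.
have trK := mxtrace_sqr_eigen W_orth K_eigen.
have risk0_gt0 : 0 < risk lam D2 0.
  have [|i inner_neq0] := exists_inner_col_neq0 W_orth (v := X0 - Xstar).
    by rewrite subr_eq0.
  apply: (risk_gt0_of d_gt0 lam_gt0 D2_ge0 (i := i) (lexx 0)).
  by rewrite D2_init mulr_gt0 ?ltr0n // lt_def sqrf_eq0 inner_neq0 sqr_ge0.
have risk_pos := risk_gt0 d_gt0 lam_gt0 trK D2_ge0 D2_derive risk0_gt0 D2_cont.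
split=> [t t_ge0 | [l1 [l2 [l21 [l2_gt0 [d_even [card_l1 card_l2]]]]]]].
  apply: (gamma_line_ge d_gt0 lam_gt0 trK D2_ge0) => //.
    exact: risk_pos.
  exact: lambda_min_le.
have d_halves : (d./2 + d./2)%N = d.
  by rewrite addnn -[RHS](odd_double_half d) (negbTE d_even).
have lam_two : forall i, lam i = l1 \/ lam i = l2.
  by apply: two_fibers_cover; rewrite ?gt_eqF // card_l1 card_l2 card_ord.
have /card_gt0P[j /eqP lam_j] : (0 < #|[pred i | lam i == l2]|)%N.
  by move: d_gt0; rewrite card_l2 -{1}d_halves addn_gt0 orbb.
rewrite (lambda_min_two_valued (ltW l21) lam_two lam_j).
exact (gamma_line_two_levels_cvg d_gt0 lam_gt0 trK D2_ge0 D2_derive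
  l2_gt0 l21 lam_two card_l1 card_l2 risk_pos).
Qed.
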